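(* Let $f$ be a generalized timelike minimal surface with real Weierstrass data $(g_1,g_2,\hat{\omega}_1du,\hat{\omega}_2dv)$, and let $p$ be a singular point with $\hat\omega_1\hat\omega_2(p)=0$ and $\operatorname{rank}(df_p)=1$. Then: (i) If $\hat\omega_1(p)=0$, then $f$ is a front at $p$ if and only if $(g_1)_u(p)\neq0$; if $\hat\omega_2(p)=0$, then $f$ is a front at $p$ if and only if $(g_2)_v(p)\neq0$. (ii) If $\hat\omega_1(p)=0$, then $p$ is non-degenerate if and only if $(\hat\omega_1)_u(p)\neq0$ and $g_1g_2(p)\neq1$; if $\hat\omega_2(p)=0$, then $p$ is non-degenerate if and only if $(\hat\omega_2)_v(p)\neq0$ and $g_1g_2(p)\neq1$.
   Context: $\mathbb{L}^3$ is $\mathbb{R}^3$ with the Lorentzian metric $\langle\,,\rangle=-dt^2+dx^2+dy^2$. A generalized timelike minimal surface is a non-constant smooth map $f\colon\Sigma\to\mathbb{L}^3$ from a 2-manifold which is an immersion on an open dense subset and such that near each point there are local coordinates $(u,v)$ with $\langle f_u,f_u\rangle=\langle f_v,f_v\rangle=0$ and $f_{uv}=0$. In such coordinates $f(u,v)=\tfrac12\int_{u_0}^u(-1-g_1^2,1-g_1^2,2g_1)\hat{\omega}_1du+\tfrac12\int_{v_0}^v(1+g_2^2,1-g_2^2,-2g_2)\hat{\omega}_2dv+f(u_0,v_0)$, with $g_1,\hat\omega_1$ functions of $u$ and $g_2,\hat\omega_2$ functions of $v$; this quadruple is the real Weierstrass data. Standing assumption: $g_1,g_2$ take finite real values at every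 singular point (point where $f$ is not an immersion). Such $f$ is a frontal with unit normal $n=(g_1+g_2,\,-g_1+g_2,\,1+g_1g_2)/\sqrt{(1-g_1g_2)^2+2(g_1+g_2)^2}$ (Euclidean-orthogonal to $df$); $f$ is a front at $p$ if $(f,n)$ is an immersion at $p$. The signed area density is $\lambda=\det(f_u,f_v,n)$, and a singular point $p$ is non-degenerate if $d\lambda_p\neq0$. *)

From HB Require Import structures.
From mathcomp Require Import all_boot all_order all_algebra.
From mathcomp Require Import all_classical all_reals all_analysis.
Set Implicit Arguments. Unset Strict Implicit. Unset Printing Implicit Defensive.
Import Order.TTheory GRing.Theory Num.Theory.
Import numFieldNormedType.Exports.
Local Open Scope classical_set_scope.
Local Open Scope ring_scope.

Section Defs.
Variable R : realType.

Definition vec3 (a b c : R) : 'rV[R]_3 := \row_(j < 3) [:: a; b; c]`_j.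
Definition pt2 (u v : R) : 'rV[R]_2 := \row_(j < 2) [:: u; v]`_j.
Definition e_u : 'rV[R]_2 := pt2 1 0.
Definition e_v : 'rV[R]_2 := pt2 0 1.

Definition smooth_on (A : set R) (g : R -> R) :=
  forall (n : nat) (x : R), A x -> derivable (derive1n n g) x 1.

Definition immersion_at (m : nat) (h : 'rV[R]_2 -> 'rV[R]_m) (q : 'rV[R]_2) :=
  differentiable h q /\ injective ('d h q).

(* the two null curve directions appearing in the real Weierstrass formula *)
Definition wdir1 (g : R) : 'rV[R]_3 := vec3 (-1 - g ^+ 2) (1 - g ^+ 2) (2 * g).
Definition wdir2 (g : R) : 'rV[R]_3 := vec3 (1 + g ^+ 2) (1 - g ^+ 2) (- (2 * g)).

Definition unit_normal (g1 g2 : R -> R) (q : 'rV[R]_2) : 'rV[R]_3 :=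
  let a := g1 (q 0 0) in let b := g2 (q 0 1) in
  (Num.sqrt ((1 - a * b) ^+ 2 + 2 * (a + b) ^+ 2))^-1 *: vec3 (a + b) (- a + b) (1 + a * b).

Definition mx3 (x y z : 'rV[R]_3) : 'M[R]_3 :=
  \matrix_(i < 3, j < 3) [:: x 0 j; y 0 j; z 0 j]`_i.

Definition area_density (f : 'rV[R]_2 -> 'rV[R]_3) (n : 'rV[R]_2 -> 'rV[R]_3)
  (q : 'rV[R]_2) : R :=
  \det (mx3 ('D_e_u f q) ('D_e_v f q) (n q)).

Definition front_at (f n : 'rV[R]_2 -> 'rV[R]_3) (p : 'rV[R]_2) :=
  immersion_at (fun q => row_mx (f q) (n q)) p.

Definition nondegenerate_at (f n : 'rV[R]_2 -> 'rV[R]_3) (p : 'rV[R]_2) :=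
  differentiable (area_density f n) p /\
  exists w : 'rV[R]_2, 'd (area_density f n) p w != 0.

Definition rect (a1 b1 a2 b2 : R) : set 'rV[R]_2 :=
  fun q => (q 0 0 \in `]a1, b1[) /\ (q 0 1 \in `]a2, b2[).

End Defs.

(* Near p the Weierstrass formula gives f_u = (w1/2) wdir1(g1) and f_v = (w2/2) wdir2(g2),
   and n(u, v) = N(g1 u, g2 v) for N(a, b) the normalization of (a + b, - a + b, 1 + ab);
   rank df_p = 1 forbids w1(p) = w2(p) = 0. If w1(p) = 0, then f_u = 0 and f_v <> 0, so
   d(f, n)_p is injective iff n_u = (g1)_u dN/da <> 0, and dN/da never vanishes. Since
   wdir1 a x wdir2 b is parallel to N(a, b), the signed area density is
   lambda = w1 w2 (g1 g2 - 1) |(g1 + g2, - g1 + g2, 1 + g1 g2)| / 2, so at p its only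
   possibly non-zero partial derivative is lambda_u = (w1)_u w2 (g1 g2 - 1) |...| / 2.
   The case w2(p) = 0 is symmetric. *)

From HB Require Import structures.
From mathcomp Require Import all_boot all_order all_algebra.
From mathcomp Require Import all_classical all_reals all_analysis.
From mathcomp Require Import ring lra.
Set Implicit Arguments. Unset Strict Implicit. Unset Printing Implicit Defensive.
Import Order.TTheory GRing.Theory Num.Theory.
Import numFieldNormedType.Exports.
Local Open Scope classical_set_scope.
Local Open Scope ring_scope.

Section TwoVectors.
Variable K : fieldType.

Definition free2 {W : lmodType K} (A B : W) :=
  forall s t : K, s *: A + t *: B = 0 -> s = 0 /\ t = 0.

Lemma free2C (W : lmodType K) (A B : W) : free2 A B <-> free2 B A.
Proof. by split=> AB s t; rewrite addrC => /AB []. Qed.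

Lemma free2_row_mx0 m n (x : 'rV[K]_m) (a b : 'rV[K]_n) :
  x != 0 -> free2 (row_mx 0 a) (row_mx x b) <-> a != 0.
Proof.
move=> x0; split=> [ab|a0 s t].
  apply/eqP => a_eq0; have [] := ab 1 0; last by move/eqP; rewrite oner_eq0.
  by rewrite a_eq0 row_mx0 scaler0 scale0r addr0.
rewrite !scale_row_mx add_row_mx scaler0 add0r -row_mx0 => /eq_row_mx [/eqP tx /eqP].
move: tx; rewrite scaler_eq0 (negbTE x0) orbF => /eqP t0.
by rewrite t0 scale0r addr0 scaler_eq0 (negbTE a0) orbF => /eqP.
Qed.

End TwoVectors.

Section Plane.
Variable R : realType.
Local Notation e_u := (e_u R).
Local Notation e_v := (e_v R).

Lemma pt2_0 (u v : R) : pt2 u v 0 0 = u. Proof. by rewrite mxE. Qed.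
Lemma pt2_1 (u v : R) : pt2 u v 0 1 = v. Proof. by rewrite mxE. Qed.

Lemma pt2_coord (q : 'rV[R]_2) : pt2 (q 0 0) (q 0 1) = q.
Proof. by apply/rowP => -[[|[|//]] i]; rewrite mxE /=; congr (q 0 _); apply: val_inj. Qed.

Lemma pt2_decomp (h : 'rV[R]_2) : h = h 0 0 *: e_u + h 0 1 *: e_v.
Proof.
apply/rowP => -[[|[|//]] i]; rewrite !mxE /= ?mulr1 ?mulr0 ?addr0 ?add0r;
  by congr (h 0 _); apply: val_inj.
Qed.

Lemma linear_rV2E (W : lmodType R) (L : {linear 'rV[R]_2 -> W}) h :
  L h = h 0 0 *: L e_u + h 0 1 *: L e_v.
Proof. by rewrite {1}(pt2_decomp h) linearD !linearZ. Qed.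

Lemma linear_rV2_injective (W : lmodType R) (L : {linear 'rV[R]_2 -> W}) :
  injective L <-> free2 (L e_u) (L e_v).
Proof.
split=> [Linj s t st0|free h1 h2 L12].
  have /Linj/rowP Lst0 : L (pt2 s t) = L 0 by rewrite linear_rV2E !pt2_0 !pt2_1 st0 linear0.
  by split; [move: (Lst0 0) | move: (Lst0 1)]; rewrite !mxE.
have [d0 d1] : (h1 - h2) 0 0 = 0 /\ (h1 - h2) 0 1 = 0.
  by apply: free; rewrite -linear_rV2E linearB L12 subrr.
by apply/eqP; rewrite -subr_eq0 [h1 - h2]pt2_decomp d0 d1 !scale0r addr0.
Qed.

Lemma linear_rV2_neq0 (W : lmodType R) (L : {linear 'rV[R]_2 -> W}) :
  (exists w, L w != 0) <-> L e_u != 0 \/ L e_v != 0.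
Proof.
split=> [[w]|[Lu|Lv]]; last 2 first.
- by exists e_u.
- by exists e_v.
rewrite linear_rV2E; have [->|] := eqVneq (L e_u) 0; last by left.
by rewrite scaler0 add0r scaler_eq0 negb_or => /andP[_]; right.
Qed.

Lemma shift_e_u (h u v : R) : h *: e_u + pt2 u v = pt2 (h + u) v.
Proof. by apply/rowP => -[[|[|//]] i]; rewrite !mxE /= ?mulr1 ?mulr0 ?add0r. Qed.

Lemma shift_e_v (h u v : R) : h *: e_v + pt2 u v = pt2 u (h + v).
Proof. by apply/rowP => -[[|[|//]] i]; rewrite !mxE /= ?mulr1 ?mulr0 ?add0r. Qed.

Lemma derive_e_u (W : normedModType R) (F : 'rV[R]_2 -> W) u v :
  'D_e_u F (pt2 u v) = 'D_1 (fun s => F (pt2 s v)) u.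
Proof.
rewrite /derive; do 2 f_equal; apply/funext => h.
by rewrite /= shift_e_u [h%:A]mulr1.
Qed.

Lemma derive_e_v (W : normedModType R) (F : 'rV[R]_2 -> W) u v :
  'D_e_v F (pt2 u v) = 'D_1 (fun t => F (pt2 u t)) v.
Proof.
rewrite /derive; do 2 f_equal; apply/funext => h.
by rewrite /= shift_e_v [h%:A]mulr1.
Qed.

Lemma near_rect (a1 b1 a2 b2 u v : R) : u \in `]a1, b1[ -> v \in `]a2, b2[ ->
  \forall q \near pt2 u v, rect a1 b1 a2 b2 q.
Proof.
move=> Hu Hv; near=> q; split; near: q.
- apply: (@coord_continuous R 1 2 0 0 (pt2 u v) [set s | s \in `]a1, b1[]).
  by rewrite pt2_0; exact: near_in_itvoo.
- apply: (@coord_continuous R 1 2 0 1 (pt2 u v) [set t | t \in `]a2, b2[]).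
  by rewrite pt2_1; exact: near_in_itvoo.
Unshelve. all: by end_near.
Qed.

End Plane.

Section Differentiability.
Context {R : realType} {V : normedModType R}.

Lemma near_eq_diff (W : normedModType R) (f g : V -> W) x :
  {near x, f =1 g} -> differentiable g x ->
  differentiable f x /\ 'd f x = 'd g x :> (V -> W).
Proof.
move=> fg dg.
have fg0 : \forall h \near 0, f (h + x) = g (h + x).
  by move: fg; rewrite nbhs0P; apply: filterS => h; rewrite addrC.
have ef : f \o shift x = cst (f x) + 'd g x +o_ 0 id.
  have /eqaddoP dgo := diff_locally dg.
  apply/eqaddoP => e e0; near=> h.
  change (`|f (h + x) - (f x + 'd g x h)| <= e * `|h|).
  rewrite (nbhs_singleton fg) (near fg0 h) //.
  by near: h; exact: dgo.
have dfg : 'd f x = 'd g x :> (V -> W).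
  by apply: (@diff_unique _ _ _ f ('d g x) x); [exact: diff_continuous | exact ef].
split=> //; apply/diff_locallyP; rewrite dfg.
by split; [exact: diff_continuous | exact ef].
Unshelve. all: by end_near.
Qed.

Lemma differentiable_rV_coord n (F : V -> 'rV[R]_n) x j :
  differentiable F x -> differentiable (fun y => F y 0 j) x.
Proof.
move=> dF; have -> : (fun y => F y 0 j) = (fun M : 'rV[R]_n => M 0 j) \o F by [].
by apply: differentiable_comp => //; exact: differentiable_coord.
Qed.

Lemma differentiable_rV n (F : V -> 'rV[R]_n) x :
  (forall j, differentiable (fun y => F y 0 j) x) -> differentiable F x.
Proof.
move=> dF; have -> : F = \sum_(j < n) (fun y => F y 0 j *: delta_mx 0 j).
  by rewrite fct_sumE; apply/funext => y; rewrite -row_sum_delta.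
by apply: differentiable_sum => j; exact: differentiableZl.
Qed.

Lemma differentiable_row_mx n1 n2 (F : V -> 'rV[R]_n1) (N : V -> 'rV[R]_n2) x :
  differentiable F x -> differentiable N x ->
  differentiable (fun y => row_mx (F y) (N y)) x.
Proof.
move=> dF dN; apply: differentiable_rV => j.
case: (splitP j) => k jk.
- rewrite (_ : j = lshift n2 k); last exact: val_inj.
  under eq_fun do rewrite row_mxEl; exact: differentiable_rV_coord.
- rewrite (_ : j = rshift n1 k); last exact: val_inj.
  under eq_fun do rewrite row_mxEr; exact: differentiable_rV_coord.
Qed.

Lemma diff_row_mx n1 n2 (F : V -> 'rV[R]_n1) (N : V -> 'rV[R]_n2) x h :
  differentiable F x -> differentiable N x ->
  'd (fun y => row_mx (F y) (N y)) x h = row_mx ('d F x h) ('d N x h).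
Proof.
move=> dF dN; set H := fun y => row_mx (F y) (N y).
have dH : differentiable H x by exact: differentiable_row_mx.
have dFl : 'd F x h = lsubmx ('d H x h).
  have -> : F = lsubmx \o H by apply/funext => y; rewrite /H /= row_mxKl.
  rewrite (diff_comp dH (differentiable_lsubmx _)) /=.
  by rewrite diff_lin //; exact: continuous_lsubmx.
have dNr : 'd N x h = rsubmx ('d H x h).
  have -> : N = rsubmx \o H by apply/funext => y; rewrite /H /= row_mxKr.
  rewrite (diff_comp dH (differentiable_rsubmx _)) /=.
  by rewrite diff_lin //; exact: continuous_rsubmx.
by rewrite dFl dNr hsubmxK.
Qed.

Lemma differentiable_vec3 (p q r : V -> R) x :
  differentiable p x -> differentiable q x -> differentiable r x ->
  differentiable (fun y => vec3 (p y) (q y) (r y)) x.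
Proof.
move=> dp dq dr; apply: differentiable_rV => j.
by under eq_fun do rewrite mxE; case: j => -[|[|[|//]]].
Qed.

Lemma differentiable_coord_comp (W : normedModType R) n (phi : R -> W) (q : 'rV[R]_n) i :
  derivable phi (q 0 i) 1 -> differentiable (fun y : 'rV[R]_n => phi (y 0 i)) q.
Proof.
move=> /derivable1_diffP dphi.
by apply: (@differentiable_comp _ _ _ _ (fun y : 'rV[R]_n => y 0 i) phi) => //;
  exact: differentiable_coord.
Qed.

Lemma differentiable_sqrt (f : V -> R) x : differentiable f x -> 0 < f x ->
  differentiable (fun y => Num.sqrt (f y)) x.
Proof.
move=> df f0; apply: (@differentiable_comp _ _ _ _ f Num.sqrt) => //.
by apply/derivable1_diffP; case: (is_derive1_sqrt f0).
Qed.

End Differentiability.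

Section LineDerivatives.
Context {R : realType} {W : normedModType R}.

Lemma derivable_scalel (c : R -> R) (X : W) t : derivable c t 1 ->
  derivable (fun s => c s *: X) t 1.
Proof. by move=> /derivable1_diffP dc; apply/derivable1_diffP; exact: differentiableZl. Qed.

Lemma derive_scalel (c : R -> R) (X : W) t : derivable c t 1 ->
  'D_1 (fun s => c s *: X) t = 'D_1 c t *: X.
Proof.
move=> /derivable1_diffP dc.
by rewrite deriveE; [rewrite diffZl // -deriveE | exact: differentiableZl].
Qed.

Lemma derive_comp1 (Psi : R -> W) (phi : R -> R) t :
  derivable phi t 1 -> derivable Psi (phi t) 1 ->
  'D_1 (Psi \o phi) t = 'D_1 phi t *: 'D_1 Psi (phi t).
Proof.
move=> /derivable1_diffP dphi /derivable1_diffP dPsi.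
rewrite deriveE; last exact: differentiable_comp.
rewrite diff_comp //= !deriveE // -[in LHS](mulr1 ('d phi t 1)).
by rewrite -[_ * 1]/(_ *: (1 : R)) linearZ.
Qed.

Lemma derive_scale_affine_neq0 (k : R -> R) (X Y : W) t :
  derivable k t 1 -> k t != 0 -> free2 X Y ->
  'D_1 (fun s => k s *: (s *: X + Y)) t != 0.
Proof.
move=> dk kt0 XY.
have dks : derivable (k * id) t 1 by apply: derivableM => //; exact: derivable_id.
have -> : (fun s => k s *: (s *: X + Y)) = (fun s => (k * id) s *: X) + (fun s => k s *: Y).
  by apply/funext => s; rewrite !fctE /= scalerDr scalerA.
rewrite deriveD; [|exact: derivable_scalel..].
rewrite !derive_scalel // deriveM // derive_id.
apply/eqP => /XY [+ dk0]; rewrite dk0 scaler0 addr0 => /eqP.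
by rewrite -[_ *: 1]/(k t * 1) mulr1 (negbTE kt0).
Qed.

Lemma derive_mul1 (a c : R -> R) t : derivable a t 1 -> derivable c t 1 ->
  'D_1 (fun s => a s * c s) t = 'D_1 a t * c t + a t * 'D_1 c t.
Proof. by move=> da dc; rewrite -mulrfctE deriveM // addrC mulrC. Qed.

End LineDerivatives.

Section Singularities.
Variable R : realType.
Local Notation e_u := (e_u R).
Local Notation e_v := (e_v R).
Implicit Types (F N : 'rV[R]_2 -> 'rV[R]_3) (p : 'rV[R]_2).

Lemma front_atP F N p : differentiable F p -> differentiable N p ->
  front_at F N p <->
  free2 (row_mx ('D_e_u F p) ('D_e_u N p)) (row_mx ('D_e_v F p) ('D_e_v N p)).
Proof.
move=> dF dN; rewrite !deriveE // -!diff_row_mx //.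
split=> [[_ /linear_rV2_injective] // | /linear_rV2_injective FNinj].
by split=> //; exact: differentiable_row_mx.
Qed.

Lemma nondegenerate_atP F N p : differentiable (area_density F N) p ->
  nondegenerate_at F N p <->
  'D_e_u (area_density F N) p != 0 \/ 'D_e_v (area_density F N) p != 0.
Proof.
move=> dl; rewrite !deriveE //.
by split=> [[_ /linear_rV2_neq0] // | /linear_rV2_neq0]; split.
Qed.

End Singularities.

Lemma det_mx33 (R : comNzRingType) (M : 'M[R]_3) : \det M =
  M 0 0 * (M 1 1 * M 2 2 - M 1 2 * M 2 1)
  - M 0 1 * (M 1 0 * M 2 2 - M 1 2 * M 2 0)
  + M 0 2 * (M 1 0 * M 2 1 - M 1 1 * M 2 0).
Proof.
rewrite (expand_det_row _ 0) !big_ord_recl big_ord0 /cofactor.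
do 2 rewrite !(expand_det_row _ 0) !big_ord_recl !big_ord0 /cofactor.
rewrite !det_mx00 !mxE /=.
pose m i j := M (inord i) (inord j).
have HM (i j : 'I_3) : M i j = m i j by rewrite /m !inord_val.
by rewrite !HM /bump /= !modn_small // /m /=; ring.
Qed.

Section WeierstrassAlgebra.
Variable R : realType.

Lemma vec3_lin2 (s t x y z x' y' z' : R) :
  s *: vec3 x y z + t *: vec3 x' y' z' =
  vec3 (s * x + t * x') (s * y + t * y') (s * z + t * z').
Proof. by apply/rowP => -[[|[|[|//]]] i]; rewrite !mxE. Qed.

Lemma scale_vec3 (c x y z : R) : c *: vec3 x y z = vec3 (c * x) (c * y) (c * z).
Proof. by apply/rowP => -[[|[|[|//]]] i]; rewrite !mxE. Qed.

Lemma vec3_eq0 (x y z : R) : vec3 x y z = 0 -> [/\ x = 0, y = 0 & z = 0].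
Proof. by move/rowP => E; split; [move: (E 0) | move: (E 1) | move: (E 2)]; rewrite !mxE. Qed.

Lemma wdir1_neq0 (g : R) : wdir1 g != 0.
Proof. by apply/eqP => /vec3_eq0 [h _ _]; have := sqr_ge0 g; lra. Qed.

Lemma wdir2_neq0 (g : R) : wdir2 g != 0.
Proof. by apply/eqP => /vec3_eq0 [h _ _]; have := sqr_ge0 g; lra. Qed.

Definition normal_sqnorm (a b : R) := (1 - a * b) ^+ 2 + 2 * (a + b) ^+ 2.

Lemma normal_sqnorm_gt0 (a b : R) : 0 < normal_sqnorm a b.
Proof. by rewrite /normal_sqnorm; nra. Qed.

Lemma sqrt_normal_sqnorm_neq0 (a b : R) : Num.sqrt (normal_sqnorm a b) != 0.
Proof. by rewrite gt_eqF // sqrtr_gt0 normal_sqnorm_gt0. Qed.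

Definition normal_map (a b : R) : 'rV[R]_3 :=
  (Num.sqrt (normal_sqnorm a b))^-1 *: vec3 (a + b) (- a + b) (1 + a * b).

Lemma unit_normalE (g1 g2 : R -> R) :
  unit_normal g1 g2 = fun q => normal_map (g1 (q 0 0)) (g2 (q 0 1)).
Proof. by []. Qed.

Definition density_factor (a b : R) :=
  2^-1 * ((a * b - 1) * Num.sqrt (normal_sqnorm a b)).

Lemma density_factor_eq0 (a b : R) : (density_factor a b == 0) = (a * b == 1).
Proof.
rewrite /density_factor !mulf_eq0 invr_eq0 pnatr_eq0 subr_eq0 /=.
by rewrite sqrtr_eq0 (lt_geF (normal_sqnorm_gt0 a b)) orbF.
Qed.

(* wdir1 a x wdir2 b = 2 (ab - 1) (a + b, - a + b, 1 + ab), a vector of squared norm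
   normal_sqnorm a b. *)
Lemma det_weierstrass (al be a b : R) :
  \det (mx3 (al *: wdir1 a) (be *: wdir2 b) (normal_map a b)) =
  4 * al * be * density_factor a b.
Proof.
rewrite det_mx33 /normal_map /density_factor !mxE /=.
set s := Num.sqrt (normal_sqnorm a b).
have s_gt0 : 0 < s by rewrite sqrtr_gt0 normal_sqnorm_gt0.
have s2 : s ^+ 2 = normal_sqnorm a b by rewrite sqr_sqrtr // ltW // normal_sqnorm_gt0.
have sE : s = normal_sqnorm a b / s by rewrite -s2 expr2 mulfK // gt_eqF.
by rewrite [X in _ = _ * (_ * (_ * X))]sE /normal_sqnorm; field; rewrite gt_eqF.
Qed.

Section Smoothness.
Context {V : normedModType R}.
Variables (A B : V -> R) (x : V).
Hypotheses (dA : differentiable A x) (dB : differentiable B x).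

Lemma differentiable_sqrt_normal_sqnorm :
  differentiable (fun y => Num.sqrt (normal_sqnorm (A y) (B y))) x.
Proof.
apply: differentiable_sqrt; last exact: normal_sqnorm_gt0.
rewrite /normal_sqnorm; under eq_fun do rewrite !expr2.
apply: differentiableD; apply: differentiableM => //.
- by apply: differentiableB => //; exact: differentiableM.
- by apply: differentiableB => //; exact: differentiableM.
- by apply: differentiableM; exact: differentiableD.
Qed.

Lemma differentiable_inv_sqrt_normal_sqnorm :
  differentiable (fun y => (Num.sqrt (normal_sqnorm (A y) (B y)))^-1) x.
Proof.
apply: differentiableV; first exact: differentiable_sqrt_normal_sqnorm.
exact: sqrt_normal_sqnorm_neq0.
Qed.

Lemma differentiable_normal_map : differentiable (fun y => normal_map (A y) (B y)) x.
Proof.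
have dk := differentiable_inv_sqrt_normal_sqnorm.
rewrite /normal_map; under eq_fun do rewrite scale_vec3.
apply: differentiable_vec3; apply: differentiableM => //.
- exact: differentiableD.
- by apply: differentiableD => //; exact: differentiableN.
- by apply: differentiableD => //; exact: differentiableM.
Qed.

Lemma differentiable_density_factor :
  differentiable (fun y => density_factor (A y) (B y)) x.
Proof.
apply: differentiableM => //; apply: differentiableM.
- by apply: differentiableB => //; exact: differentiableM.
- exact: differentiable_sqrt_normal_sqnorm.
Qed.

End Smoothness.

(* (a + b, - a + b, 1 + ab) is affine in a with direction (1, -1, b), independent of its
   value (b, b, 1) at a = 0; symmetrically in b. *)
Lemma derive_normal_map_u_neq0 (a b : R) : 'D_1 (fun t => normal_map t b) a != 0.
Proof.
have -> : (fun t => normal_map t b) = fun t =>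
    (Num.sqrt (normal_sqnorm t b))^-1 *: (t *: vec3 1 (-1) b + vec3 b b 1).
  apply/funext => t; congr (_ *: _).
  by apply/rowP => -[[|[|[|//]]] i]; rewrite !mxE /=; ring.
apply: derive_scale_affine_neq0; last 1 first.
- move=> s t; rewrite vec3_lin2 => /vec3_eq0 [h1 h2 h3].
  have s0 : s = 0 by lra.
  by move: h3; rewrite s0 mul0r add0r mulr1.
- by apply/derivable1_diffP; apply: differentiable_inv_sqrt_normal_sqnorm.
- by rewrite invr_neq0 // sqrt_normal_sqnorm_neq0.
Qed.

Lemma derive_normal_map_v_neq0 (a b : R) : 'D_1 (fun t => normal_map a t) b != 0.
Proof.
have -> : (fun t => normal_map a t) = fun t =>
    (Num.sqrt (normal_sqnorm a t))^-1 *: (t *: vec3 1 1 a + vec3 a (- a) 1).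
  apply/funext => t; congr (_ *: _).
  by apply/rowP => -[[|[|[|//]]] i]; rewrite !mxE /=; ring.
apply: derive_scale_affine_neq0; last 1 first.
- move=> s t; rewrite vec3_lin2 => /vec3_eq0 [h1 h2 h3].
  have s0 : s = 0 by lra.
  by move: h3; rewrite s0 mul0r add0r mulr1.
- by apply/derivable1_diffP; apply: differentiable_inv_sqrt_normal_sqnorm.
- by rewrite invr_neq0 // sqrt_normal_sqnorm_neq0.
Qed.

End WeierstrassAlgebra.

Lemma smooth_on_derivable (R : realType) (A : set R) (g : R -> R) x :
  smooth_on A g -> A x -> derivable g x 1.
Proof. by move=> sg Ax; exact: (sg 0%N x Ax). Qed.

Section WeierstrassPatch.
Variables (R : realType) (a1 b1 a2 b2 : R) (g1 w1 g2 w2 : R -> R).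
Variables (F1 F2 : R -> 'rV[R]_3) (f : 'rV[R]_2 -> 'rV[R]_3).
Hypotheses (Hg1 : smooth_on `]a1, b1[ g1) (Hw1 : smooth_on `]a1, b1[ w1).
Hypotheses (Hg2 : smooth_on `]a2, b2[ g2) (Hw2 : smooth_on `]a2, b2[ w2).
Hypothesis HF1 :
  forall s, s \in `]a1, b1[ -> is_derive s 1 F1 ((2^-1 * w1 s) *: wdir1 (g1 s)).
Hypothesis HF2 :
  forall t, t \in `]a2, b2[ -> is_derive t 1 F2 ((2^-1 * w2 t) *: wdir2 (g2 t)).
Hypothesis Hf :
  forall u v, u \in `]a1, b1[ -> v \in `]a2, b2[ -> f (pt2 u v) = F1 u + F2 v.

Local Notation e_u := (e_u R).
Local Notation e_v := (e_v R).
Local Notation n := (unit_normal g1 g2).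
Local Notation I1 := `]a1, b1[.
Local Notation I2 := `]a2, b2[.

Definition weierstrass_density (q : 'rV[R]_2) :=
  w1 (q 0 0) * (w2 (q 0 1) * density_factor (g1 (q 0 0)) (g2 (q 0 1))).

Lemma f_near_sum u v (Hu : u \in I1) (Hv : v \in I2) :
  \forall q \near pt2 u v, f q = F1 (q 0 0) + F2 (q 0 1).
Proof. by apply: filterS (near_rect Hu Hv) => q [q0 q1]; rewrite -{1}(pt2_coord q) Hf. Qed.

Lemma differentiable_f u v (Hu : u \in I1) (Hv : v \in I2) :
  differentiable f (pt2 u v).
Proof.
apply: (proj1 (near_eq_diff (f_near_sum Hu Hv) _)).
apply: differentiableD; apply: differentiable_coord_comp; rewrite ?pt2_0 ?pt2_1.
- by have [] := HF1 Hu.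
- by have [] := HF2 Hv.
Qed.

Lemma derive_e_u_f u v (Hu : u \in I1) (Hv : v \in I2) :
  'D_e_u f (pt2 u v) = (2^-1 * w1 u) *: wdir1 (g1 u).
Proof.
rewrite (near_eq_derive _ (f_near_sum Hu Hv)) derive_e_u.
have -> : (fun s => F1 (pt2 s v 0 0) + F2 (pt2 s v 0 1)) = F1 + cst (F2 v).
  by apply/funext => s; rewrite pt2_0 pt2_1.
have [dF1 <-] := HF1 Hu.
by rewrite deriveD; [rewrite derive_cst addr0 | | exact: derivable_cst].
Qed.

Lemma derive_e_v_f u v (Hu : u \in I1) (Hv : v \in I2) :
  'D_e_v f (pt2 u v) = (2^-1 * w2 v) *: wdir2 (g2 v).
Proof.
rewrite (near_eq_derive _ (f_near_sum Hu Hv)) derive_e_v.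
have -> : (fun t => F1 (pt2 u t 0 0) + F2 (pt2 u t 0 1)) = cst (F1 u) + F2.
  by apply/funext => t; rewrite pt2_0 pt2_1.
have [dF2 <-] := HF2 Hv.
by rewrite deriveD; [rewrite derive_cst add0r | exact: derivable_cst |].
Qed.

Lemma differentiable_unit_normal u v (Hu : u \in I1) (Hv : v \in I2) :
  differentiable n (pt2 u v).
Proof.
rewrite unit_normalE; apply: differentiable_normal_map; apply: differentiable_coord_comp.
- by rewrite pt2_0; exact: (smooth_on_derivable Hg1).
- by rewrite pt2_1; exact: (smooth_on_derivable Hg2).
Qed.

Lemma derive_e_u_unit_normal u v (Hu : u \in I1) :
  'D_e_u n (pt2 u v) = derive1 g1 u *: 'D_1 (fun t => normal_map t (g2 v)) (g1 u).
Proof.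
rewrite derive_e_u unit_normalE.
have -> : (fun s => normal_map (g1 (pt2 s v 0 0)) (g2 (pt2 s v 0 1))) =
    (fun t => normal_map t (g2 v)) \o g1 by apply/funext => s; rewrite /= pt2_0 pt2_1.
rewrite derive_comp1 ?derive1E; [by [] | exact: (smooth_on_derivable Hg1) |].
by apply/derivable1_diffP; exact: differentiable_normal_map.
Qed.

Lemma derive_e_v_unit_normal u v (Hv : v \in I2) :
  'D_e_v n (pt2 u v) = derive1 g2 v *: 'D_1 (fun t => normal_map (g1 u) t) (g2 v).
Proof.
rewrite derive_e_v unit_normalE.
have -> : (fun t => normal_map (g1 (pt2 u t 0 0)) (g2 (pt2 u t 0 1))) =
    (fun t => normal_map (g1 u) t) \o g2 by apply/funext => t; rewrite /= pt2_0 pt2_1.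
rewrite derive_comp1 ?derive1E; [by [] | exact: (smooth_on_derivable Hg2) |].
by apply/derivable1_diffP; exact: differentiable_normal_map.
Qed.

Lemma differentiable_weierstrass_density u v (Hu : u \in I1) (Hv : v \in I2) :
  differentiable weierstrass_density (pt2 u v).
Proof.
have dg1 := differentiable_coord_comp (smooth_on_derivable Hg1 _).
have dg2 := differentiable_coord_comp (smooth_on_derivable Hg2 _).
have dw1 := differentiable_coord_comp (smooth_on_derivable Hw1 _).
have dw2 := differentiable_coord_comp (smooth_on_derivable Hw2 _).
rewrite /weierstrass_density; apply: differentiableM; last apply: differentiableM.
- by apply: dw1; rewrite pt2_0.
- by apply: dw2; rewrite pt2_1.
- apply: differentiable_density_factor.
  + by apply: dg1; rewrite pt2_0.
  + by apply: dg2; rewrite pt2_1.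
Qed.

Lemma derive_e_u_weierstrass_density u v (Hu : u \in I1) :
  'D_e_u weierstrass_density (pt2 u v) =
  derive1 w1 u * (w2 v * density_factor (g1 u) (g2 v)) +
  w1 u * 'D_1 (fun s => w2 v * density_factor (g1 s) (g2 v)) u.
Proof.
rewrite derive_e_u /weierstrass_density.
under eq_fun do rewrite !pt2_0 !pt2_1.
rewrite [LHS]derive_mul1 ?derive1E; [by [] | exact: (smooth_on_derivable Hw1) |].
apply/derivable1_diffP; apply: differentiableM => //.
apply: differentiable_density_factor => //.
by apply/derivable1_diffP; exact: (smooth_on_derivable Hg1).
Qed.

Lemma derive_e_v_weierstrass_density u v (Hv : v \in I2) :
  'D_e_v weierstrass_density (pt2 u v) =
  derive1 w2 v * (w1 u * density_factor (g1 u) (g2 v)) +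
  w2 v * 'D_1 (fun t => w1 u * density_factor (g1 u) (g2 t)) v.
Proof.
rewrite derive_e_v /weierstrass_density.
under eq_fun do rewrite !pt2_0 !pt2_1 mulrCA.
rewrite [LHS]derive_mul1 ?derive1E; [by [] | exact: (smooth_on_derivable Hw2) |].
apply/derivable1_diffP; apply: differentiableM => //.
apply: differentiable_density_factor => //.
by apply/derivable1_diffP; exact: (smooth_on_derivable Hg2).
Qed.

Lemma area_density_near u v (Hu : u \in I1) (Hv : v \in I2) :
  \forall q \near pt2 u v, area_density f n q = weierstrass_density q.
Proof.
apply: filterS (near_rect Hu Hv) => q [q0 q1].
rewrite -(pt2_coord q) /area_density (derive_e_u_f q0 q1) (derive_e_v_f q0 q1).
rewrite unit_normalE /= !pt2_0 !pt2_1 det_weierstrass /weierstrass_density !pt2_0 !pt2_1.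
by field.
Qed.

Section SingularPoint.
Variables (u v : R).
Hypotheses (Hu : u \in I1) (Hv : v \in I2).

Lemma rank_diff_f_eq0 :
  w1 u = 0 -> w2 v = 0 -> \rank (lin1_mx ('d f (pt2 u v))) = 0%N.
Proof.
move=> w10 w20; suff -> : lin1_mx ('d f (pt2 u v)) = 0 by rewrite mxrank0.
apply/matrixP => i j; rewrite mxE linear_rV2E -!deriveE; [|exact: differentiable_f..].
by rewrite derive_e_u_f // derive_e_v_f // w10 w20 !mulr0 !scale0r !scaler0 addr0 !mxE.
Qed.

Lemma front_at_w1_root : w1 u = 0 -> w2 v != 0 ->
  front_at f n (pt2 u v) <-> derive1 g1 u != 0.
Proof.
move=> w10 w20.
apply: iff_trans (front_atP (differentiable_f Hu Hv) (differentiable_unit_normal Hu Hv)) _.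
rewrite derive_e_u_f // w10 mulr0 scale0r.
apply: iff_trans (free2_row_mx0 _ _ _) _.
  by rewrite derive_e_v_f // scaler_eq0 negb_or mulf_neq0 ?invr_neq0 ?wdir2_neq0.
by rewrite derive_e_u_unit_normal // scaler_eq0 (negbTE (derive_normal_map_u_neq0 _ _)) orbF.
Qed.

Lemma front_at_w2_root : w2 v = 0 -> w1 u != 0 ->
  front_at f n (pt2 u v) <-> derive1 g2 v != 0.
Proof.
move=> w20 w10.
apply: iff_trans (front_atP (differentiable_f Hu Hv) (differentiable_unit_normal Hu Hv)) _.
rewrite derive_e_v_f // w20 mulr0 scale0r.
apply: iff_trans (free2C _ _) _; apply: iff_trans (free2_row_mx0 _ _ _) _.
  by rewrite derive_e_u_f // scaler_eq0 negb_or mulf_neq0 ?invr_neq0 ?wdir1_neq0.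
by rewrite derive_e_v_unit_normal // scaler_eq0 (negbTE (derive_normal_map_v_neq0 _ _)) orbF.
Qed.

Lemma nondegenerate_at_w1_root : w1 u = 0 -> w2 v != 0 ->
  nondegenerate_at f n (pt2 u v) <-> derive1 w1 u != 0 /\ g1 u * g2 v != 1.
Proof.
move=> w10 w20; have lambdaE := area_density_near Hu Hv.
have [dl _] := near_eq_diff lambdaE (differentiable_weierstrass_density Hu Hv).
apply: iff_trans (nondegenerate_atP dl) _.
rewrite !(near_eq_derive _ lambdaE) derive_e_u_weierstrass_density //.
rewrite derive_e_v_weierstrass_density // w10.
have -> : (fun t => 0 * density_factor (g1 u) (g2 t)) = cst 0.
  by apply/funext => t; rewrite mul0r.
rewrite derive_cst !mul0r !mulr0 !addr0 eqxx 2!mulf_eq0 density_factor_eq0 (negbTE w20) /=.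
by rewrite negb_or; split=> [[/andP | []] | /andP]; last left.
Qed.

Lemma nondegenerate_at_w2_root : w2 v = 0 -> w1 u != 0 ->
  nondegenerate_at f n (pt2 u v) <-> derive1 w2 v != 0 /\ g1 u * g2 v != 1.
Proof.
move=> w20 w10; have lambdaE := area_density_near Hu Hv.
have [dl _] := near_eq_diff lambdaE (differentiable_weierstrass_density Hu Hv).
apply: iff_trans (nondegenerate_atP dl) _.
rewrite !(near_eq_derive _ lambdaE) derive_e_u_weierstrass_density //.
rewrite derive_e_v_weierstrass_density // w20.
have -> : (fun s => 0 * density_factor (g1 s) (g2 v)) = cst 0.
  by apply/funext => s; rewrite mul0r.
rewrite derive_cst !mul0r !mulr0 !addr0 eqxx 2!mulf_eq0 density_factor_eq0 (negbTE w10) /=.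
by rewrite negb_or; split=> [[[] | /andP] | /andP]; last right.
Qed.

End SingularPoint.

End WeierstrassPatch.

Theorem lemma4p1 (R : realType)
  (a1 b1 a2 b2 : R) (g1 w1 g2 w2 : R -> R) (F1 F2 : R -> 'rV[R]_3)
  (f : 'rV[R]_2 -> 'rV[R]_3) (u0 v0 : R) :
  (* real Weierstrass data, smooth on the coordinate intervals *)
  smooth_on `]a1, b1[ g1 -> smooth_on `]a1, b1[ w1 ->
  smooth_on `]a2, b2[ g2 -> smooth_on `]a2, b2[ w2 ->
  (* F1, F2 are the two integrals of the Weierstrass representation *)
  (forall s, s \in `]a1, b1[ -> is_derive s 1 F1 ((2^-1 * w1 s) *: wdir1 (g1 s))) ->
  (forall t, t \in `]a2, b2[ -> is_derive t 1 F2 ((2^-1 * w2 t) *: wdir2 (g2 t))) ->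
  (* f on the coordinate rectangle *)
  (forall u v, u \in `]a1, b1[ -> v \in `]a2, b2[ -> f (pt2 u v) = F1 u + F2 v) ->
  (* f is an immersion on an open dense subset of the coordinate rectangle *)
  (exists O : set 'rV[R]_2, open O /\
     O `<=` rect a1 b1 a2 b2 /\
     rect a1 b1 a2 b2 `<=` closure O /\
     (forall q, O q -> immersion_at f q)) ->
  (* p = (u0, v0) is a singular point with w1 w2 (p) = 0 and rank df_p = 1 *)
  u0 \in `]a1, b1[ -> v0 \in `]a2, b2[ ->
  ~ immersion_at f (pt2 u0 v0) ->
  w1 u0 * w2 v0 = 0 ->
  \rank (lin1_mx ('d f (pt2 u0 v0))) = 1%N ->
  [/\ (w1 u0 = 0 -> (front_at f (unit_normal g1 g2) (pt2 u0 v0) <-> derive1 g1 u0 != 0)),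
      (w2 v0 = 0 -> (front_at f (unit_normal g1 g2) (pt2 u0 v0) <-> derive1 g2 v0 != 0)),
      (w1 u0 = 0 -> (nondegenerate_at f (unit_normal g1 g2) (pt2 u0 v0) <->
                     derive1 w1 u0 != 0 /\ g1 u0 * g2 v0 != 1)) &
      (w2 v0 = 0 -> (nondegenerate_at f (unit_normal g1 g2) (pt2 u0 v0) <->
                     derive1 w2 v0 != 0 /\ g1 u0 * g2 v0 != 1))].
Proof.
move=> Hg1 Hw1 Hg2 Hw2 HF1 HF2 Hf _ Hu Hv _ _ rank1.
have w2_neq0 : w1 u0 = 0 -> w2 v0 != 0.
  by move=> w10; apply/eqP => w20; rewrite (rank_diff_f_eq0 HF1 HF2 Hf Hu Hv w10 w20) in rank1.
have w1_neq0 : w2 v0 = 0 -> w1 u0 != 0.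
  by move=> w20; apply/eqP => w10; rewrite (rank_diff_f_eq0 HF1 HF2 Hf Hu Hv w10 w20) in rank1.
split=> [w10|w20|w10|w20].
- exact: (front_at_w1_root Hg1 Hg2 HF1 HF2 Hf Hu Hv w10 (w2_neq0 w10)).
- exact: (front_at_w2_root Hg1 Hg2 HF1 HF2 Hf Hu Hv w20 (w1_neq0 w20)).
- exact: (nondegenerate_at_w1_root Hg1 Hw1 Hg2 Hw2 HF1 HF2 Hf Hu Hv w10 (w2_neq0 w10)).
- exact: (nondegenerate_at_w2_root Hg1 Hw1 Hg2 Hw2 HF1 HF2 Hf Hu Hv w20 (w1_neq0 w20)).
Qed.
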